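(* Let $S$ be a semigroup and $a_1,a_2,\dotsc$ a bijective (injective) sequence in $S$ that has no proper sumsequence. Let $A_\infty:=\bigcap_{n=1}^{\infty}\mathrm{FS}(a_n,a_{n+1},\dotsc)$. Then: (1) for each $s\in A_\infty$ and each $n$, there is a nonempty finite index set $F$ with $\min F\ge n$ and $s=a_F$; (2) $A_\infty$ is a (nonempty) subsemigroup of $S$; (3) every sequence $b_1,b_2,\dotsc$ of elements of $A_\infty$ is a sumsequence of $a_1,a_2,\dotsc$.
   Context: Semigroups are written additively and are not assumed commutative. For a sequence $a_1,a_2,\dotsc$ and a finite nonempty index set $F=\{i_1<\dotsb<i_m\}\subseteq\mathbb N$, let $a_F:=a_{i_1}+\dotsb+a_{i_m}$; write $F_1<F_2$ if every element of $F_1$ is smaller than every element of $F_2$. A sumsequence of $a_1,a_2,\dotsc$ is a sequence $a_{F_1},a_{F_2},\dotsc$ for some sequence $F_1<F_2<\dotsb$ of nonempty finite index sets. A sequence is proper if $a_{F_1}\ne a_{F_2}$ for all nonempty finite $F_1<F_2$. $\mathrm{FS}(a_n,a_{n+1},\dotsc)$ is the set of all $a_F$ with $F$ nonempty finite and $\min F\ge n$. *)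

From mathcomp Require Import all_boot.
Set Implicit Arguments. Unset Strict Implicit. Unset Printing Implicit Defensive.

(* A semigroup is given by a carrier S and an associative operation op
   (written additively in the paper, not assumed commutative).
   Sequences are indexed by nat (starting at 0 instead of 1).
   A nonempty finite index set F = {i_1 < ... < i_m} is represented by the
   strictly increasing nonempty list [:: i_1; ...; i_m]. *)

Definition idxset (F : seq nat) : bool := (F != [::]) && sorted ltn F.

(* a_F = a_{i_1} + ... + a_{i_m} (left-bracketed; bracketing is irrelevant
   by associativity).  The value on the empty list is junk and never used. *)
Definition sumF (S : Type) (op : S -> S -> S) (a : nat -> S) (F : seq nat) : S :=
  if F is i :: s then foldl (fun x j => op x (a j)) (a i) s else a 0.

Definition setlt (F1 F2 : seq nat) : bool :=
  all (fun i => all (fun j => i < j) F2) F1.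

Definition sumseq (S : Type) (op : S -> S -> S) (a b : nat -> S) : Prop :=
  exists F : nat -> seq nat,
    (forall k, idxset (F k)) /\ (forall k, setlt (F k) (F k.+1)) /\
    (forall k, b k = sumF op a (F k)).

Definition proper_seq (S : Type) (op : S -> S -> S) (a : nat -> S) : Prop :=
  forall F1 F2, idxset F1 -> idxset F2 -> setlt F1 F2 ->
    sumF op a F1 <> sumF op a F2.

Definition FS (S : Type) (op : S -> S -> S) (a : nat -> S) (n : nat) : S -> Prop :=
  fun s => exists F, [/\ idxset F, all (fun i => n <= i) F & s = sumF op a F].

Definition Ainf (S : Type) (op : S -> S -> S) (a : nat -> S) : S -> Prop :=
  fun s => forall n, FS op a n s.

(* (1) is the definition of A_oo unfolded.
   (2) Closure: given x = a_F and y = a_G with G chosen entirely above F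
       (possible since y lies in every tail FS), x + y = a_(F ++ G).
       Nonemptiness is the heart of the lemma and is proved by contradiction:
       if A_oo is empty, every s leaves FS(a_N, ...) for some N, and since
       there are only finitely many a_F with F contained in [0, m], some
       N > m "escapes" all of them at once.  Iterating m |-> N gives indices
       m_0 < m_1 < ... such that no a_F with F in [0, m_k] lies in
       FS(a_(m_(k+1)), ...); then the subsequence (a_(m_k))_k is proper, and it
       is a sumsequence of a, contradicting the hypothesis.
   (3) Each b_k lies in every tail FS, so index sets F_0 < F_1 < ... with
       b_k = a_(F_k) are picked recursively, each above the previous one. *)
From Stdlib Require Import Classical ClassicalEpsilon.
From mathcomp Require Import all_boot.

Set Implicit Arguments.
Unset Strict Implicit.
Unset Printing Implicit Defensive.

Notation maxidx F := (\max_(i <- F) i).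

Lemma setlt_above (F G : seq nat) :
  all (fun j => maxidx F < j) G -> setlt F G.
Proof.
move=> G_above; apply/allP => i iF; apply: sub_all G_above => j /=.
exact/leq_ltn_trans/leq_bigmax_seq.
Qed.

Lemma idxset_cat (F G : seq nat) :
  idxset F -> idxset G -> setlt F G -> idxset (F ++ G).
Proof.
case/andP=> F_nil F_sorted /andP[_ G_sorted] FG.
apply/andP; split; first by case: F F_nil {F_sorted FG}.
rewrite sorted_pairwise; last exact: ltn_trans.
by rewrite pairwise_cat -!sorted_pairwise ?F_sorted ?G_sorted ?andbT //;
  apply: ltn_trans.
Qed.

Lemma idxset_map (f : nat -> nat) (F : seq nat) :
  {homo f : i j / i < j} -> idxset F -> idxset (map f F).
Proof.
move=> f_incr /andP[F_nil F_sorted]; apply/andP; split.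
  by rewrite -size_eq0 size_map size_eq0.
exact: homo_sorted F_sorted.
Qed.

Lemma idxset_head_min (j : nat) (F : seq nat) :
  idxset (j :: F) -> all (fun i => j <= i) (j :: F).
Proof.
case/andP=> _ /order_path_min-/(_ ltn_trans) F_above.
by rewrite /= leqnn; apply: sub_all F_above => i /ltnW.
Qed.

(* All subsequences of a list.  Applied to [0, m] it gives a finite list of
   all index sets inside [0, m], which drives the finiteness argument. *)
Fixpoint subseqs (T : Type) (s : seq T) : seq (seq T) :=
  if s is x :: s' then [seq x :: t | t <- subseqs s'] ++ subseqs s'
  else [:: [::]].

Lemma filter_in_subseqs (T : eqType) (p : pred T) (s : seq T) :
  [seq x <- s | p x] \in subseqs s.
Proof.
elim: s => [|x s IHs] /=; first by rewrite inE.
by rewrite mem_cat; case: (p x); rewrite ?map_f ?IHs ?orbT.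
Qed.

(* An index set inside [0, m] is the filter of [0, m] by its own membership. *)
Lemma bounded_idxset_in_subseqs (m : nat) (F : seq nat) :
  idxset F -> all (fun i => i <= m) F -> F \in subseqs (iota 0 m.+1).
Proof.
case/andP=> _ F_sorted F_le.
suff -> : F = [seq i <- iota 0 m.+1 | i \in F] by apply: filter_in_subseqs.
apply: irr_sorted_eq F_sorted _ _; [exact: ltn_trans | exact: ltnn | |].
  exact/sorted_filter/iota_ltn_sorted/ltn_trans.
move=> i; rewrite mem_filter mem_iota add0n ltnS.
by case iF: (i \in F); rewrite //= (allP F_le).
Qed.

Section Sums.
Variables (S : Type) (op : S -> S -> S) (a : nat -> S).

Lemma sumF_map (f : nat -> nat) (F : seq nat) : F != [::] ->
  sumF op (fun k => a (f k)) F = sumF op a (map f F).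
Proof. by case: F => //= i s _; elim: s (a (f i)) => //= j s IHs x. Qed.

Lemma FS_mono (n m : nat) (s : S) : n <= m -> FS op a m s -> FS op a n s.
Proof.
move=> le_nm [F [F_idx F_above ->]]; exists F; split => //.
by apply: sub_all F_above => i; apply: leq_trans.
Qed.

Hypothesis op_assoc : associative op.

Lemma sumF_cat (F G : seq nat) : F != [::] -> G != [::] ->
  sumF op a (F ++ G) = op (sumF op a F) (sumF op a G).
Proof.
case: F => // i s _; case: G => // j t _ /=; rewrite foldl_cat /=.
by elim: t (foldl _ (a i) s) (a j) => //= k t IHt x y; rewrite -op_assoc IHt.
Qed.

Lemma Ainf_op (x y : S) : Ainf op a x -> Ainf op a y -> Ainf op a (op x y).
Proof.
move=> Ax Ay n; have [F [F_idx F_above ->]] := Ax n.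
have [G [G_idx G_above ->]] := Ay (n + maxidx F).+1.
have FG : setlt F G.
  by apply: setlt_above; apply: sub_all G_above => j; apply/leq_trans/leq_addl.
exists (F ++ G); split; first exact: idxset_cat.
  rewrite all_cat F_above; apply: sub_all G_above => j /=.
  by apply/leq_trans/ltnW; rewrite ltnS leq_addr.
by rewrite sumF_cat //; [case/andP: F_idx | case/andP: G_idx].
Qed.

Lemma Ainf_sumseq (b : nat -> S) : (forall k, Ainf op a (b k)) -> sumseq op a b.
Proof.
move=> Ab.
have [pick pickP] := choice (fun (nk : nat * nat) (F : seq nat) =>
  [/\ idxset F, all (fun i => nk.1 <= i) F & b nk.2 = sumF op a F])
  (fun nk => Ab nk.2 nk.1).
pose F := fix F k :=
  if k is k'.+1 then pick ((maxidx (F k')).+1, k) else pick (0, 0).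
have F_above k : all (fun i => maxidx (F k) < i) (F k.+1).
  by have [] := pickP ((maxidx (F k)).+1, k.+1).
have F_sum k : idxset (F k) /\ b k = sumF op a (F k).
  case: k => [|k]; first by have [] := pickP (0, 0).
  by have [] := pickP ((maxidx (F k)).+1, k.+1).
exists F; split; [|split] => k; try by case: (F_sum k).
exact: setlt_above.
Qed.

End Sums.

Section Escape.
Variables (S : Type) (op : S -> S -> S) (a : nat -> S).

Definition escapes (m N : nat) : Prop :=
  forall F, idxset F -> all (fun i => i <= m) F -> ~ FS op a N (sumF op a F).

Lemma sumseq_subsequence (mk : nat -> nat) :
  {homo mk : i j / i < j} -> sumseq op a (fun k => a (mk k)).
Proof.
move=> mk_incr; exists (fun k => [:: mk k]).
by split; [|split] => // k; rewrite /setlt /= mk_incr.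
Qed.

(* A subsequence along indices each escaping its predecessor is proper: for
   F1 < F2 with F2 starting at j+1, the sum over F1 uses indices <= mk j,
   while the sum over F2 lies in FS(a_(mk (j+1)), ...). *)
Lemma escaping_subsequence_proper (mk : nat -> nat) :
  {homo mk : i j / i < j} -> (forall k, escapes (mk k) (mk k.+1)) ->
  proper_seq op (fun k => a (mk k)).
Proof.
move=> mk_incr mk_escapes F1 [//|j F2] F1_idx F2_idx F1F2.
have F1_below : all (fun i => i < j) F1 by apply: sub_all F1F2 => i /andP[].
case: j F1_below F2_idx {F1F2} => [|j] F1_below F2_idx.
  by case/andP: F1_idx => + _; case: F1 F1_below.
rewrite (sumF_map op a mk (F := j.+1 :: F2)) // sumF_map;
  last by case/andP: F1_idx.
move=> sum_eq; apply: (mk_escapes j (map mk F1)); first exact: idxset_map.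
  rewrite all_map; apply: sub_all F1_below => i /=.
  by rewrite ltnS leq_eqVlt => /predU1P[-> // | /mk_incr/ltnW].
rewrite sum_eq; exists (map mk (j.+1 :: F2)); split => //.
  exact: idxset_map.
rewrite all_map; apply: sub_all (idxset_head_min F2_idx) => i /=.
by rewrite leq_eqVlt => /predU1P[-> // | /mk_incr/ltnW].
Qed.

Hypothesis Ainf_empty : forall s, ~ Ainf op a s.

Lemma FS_leave (s : S) : exists n, ~ FS op a n s.
Proof. exact: not_all_ex_not (Ainf_empty (s := s)). Qed.

Lemma FS_leave_all (L : seq (seq nat)) :
  exists N, forall F, F \in L -> ~ FS op a N (sumF op a F).
Proof.
elim: L => [|F L [N N_leaves]]; first by exists 0.
have [n n_leaves] := FS_leave (sumF op a F).
exists (maxn n N) => G; rewrite inE => /predU1P[-> | GL] G_in.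
  by apply: n_leaves; apply: FS_mono G_in; apply: leq_maxl.
by apply: (N_leaves G GL); apply: FS_mono G_in; apply: leq_maxr.
Qed.

(* Finitely many index sets lie inside [0, m], so some N > m escapes m. *)
Lemma escapes_exist (m : nat) : exists N, m < N /\ escapes m N.
Proof.
have [N N_leaves] := FS_leave_all (subseqs (iota 0 m.+1)).
exists (maxn N m.+1); split=> [|F F_idx F_le]; first exact: leq_maxr.
move/(FS_mono (leq_maxl N m.+1)).
by apply: N_leaves; apply: bounded_idxset_in_subseqs.
Qed.

End Escape.

(* Part (2), nonemptiness: otherwise iterating escapes_exist from 0 yields
   an escaping, hence proper, subsequence of a. *)
Lemma Ainf_nonempty (S : Type) (op : S -> S -> S) (a : nat -> S) :
  (forall b, sumseq op a b -> ~ proper_seq op b) -> exists s, Ainf op a s.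
Proof.
move=> no_proper; apply: NNPP => no_Ainf.
have Ainf_empty s : ~ Ainf op a s by move=> As; apply: no_Ainf; exists s.
have [next nextP] := choice _ (escapes_exist Ainf_empty).
pose mk k := iter k next 0.
have mk_incr : {homo mk : i j / i < j}.
  by apply: homo_ltn => [|k]; [apply: ltn_trans | case: (nextP (mk k))].
apply: (no_proper _ (sumseq_subsequence op a mk_incr)).
by apply: escaping_subsequence_proper => // k; case: (nextP (mk k)).
Qed.

Theorem lemma2p4 (S : Type) (op : S -> S -> S) (op_assoc : associative op)
    (a : nat -> S) (a_inj : injective a)
    (no_proper : forall b, sumseq op a b -> ~ proper_seq op b) :
  (forall s, Ainf op a s -> forall n, exists F : seq nat,
      [/\ idxset F, all (fun i => n <= i) F & s = sumF op a F]) /\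
  ((exists s, Ainf op a s) /\
   (forall x y, Ainf op a x -> Ainf op a y -> Ainf op a (op x y))) /\
  (forall b : nat -> S, (forall k, Ainf op a (b k)) -> sumseq op a b).
Proof.
split; first by move=> s As n; exact: As.
split; first split.
- exact: Ainf_nonempty.
- exact: Ainf_op.
- exact: Ainf_sumseq.
Qed.
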